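(* Let $R$ be a dp-minimal integral domain with maximal ideal $\mathfrak M$. Then every prime ideal $\mathfrak p\neq\mathfrak M$ of $R$ is strongly prime.
   Context: Rings are commutative with identity; dp-minimal means the theory in the language of rings has dp-rank $1$ (such domains are local). An ideal $\mathfrak p$ of a domain $R$ is strongly prime if for all $x,y\in\mathrm{Frac}(R)$, $xy\in\mathfrak p$ implies $x\in\mathfrak p$ or $y\in\mathfrak p$. *)

From HB Require Import structures.
From mathcomp Require Import all_boot all_order all_algebra.
From mathcomp Require Import fraction.
Set Implicit Arguments. Unset Strict Implicit. Unset Printing Implicit Defensive.
Import GRing.Theory.
Local Open Scope ring_scope.

Section Ideals.
Variable R : comNzRingType.

Definition is_ideal (I : R -> Prop) : Prop :=
  I 0 /\ (forall x y, I x -> I y -> I (x + y)) /\ (forall r x, I x -> I (r * x)).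

Definition is_prime_ideal (P : R -> Prop) : Prop :=
  is_ideal P /\ ~ P 1 /\ (forall x y, P (x * y) -> P x \/ P y).

Definition is_maximal_ideal (M : R -> Prop) : Prop :=
  is_ideal M /\ ~ M 1 /\
  (forall J : R -> Prop, is_ideal J -> (forall x, M x -> J x) ->
     (forall x, J x <-> M x) \/ J 1).
End Ideals.

Definition in_frac (R : idomainType) (p : R -> Prop) (z : {fraction R}) : Prop :=
  exists r : R, p r /\ @FracField.tofrac R r = z.

Definition strongly_prime (R : idomainType) (p : R -> Prop) : Prop :=
  forall x y : {fraction R},
    in_frac p (x * y) -> in_frac p x \/ in_frac p y.

(* Formulas of the language of rings: MathComp first-order ring formulas
   (GRing.formula) containing no constants from R (only numerals). The
   extra symbols Inv / Unit are definable in the language of rings. *)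
Fixpoint term_noconst (R : Type) (t : GRing.term R) : bool :=
  match t with
  | GRing.Var _ => true
  | GRing.Const _ => false
  | GRing.NatConst _ => true
  | GRing.Add t1 t2 => term_noconst t1 && term_noconst t2
  | GRing.Opp t1 => term_noconst t1
  | GRing.NatMul t1 _ => term_noconst t1
  | GRing.Mul t1 t2 => term_noconst t1 && term_noconst t2
  | GRing.Inv t1 => term_noconst t1
  | GRing.Exp t1 _ => term_noconst t1
  end.

Fixpoint formula_noconst (R : Type) (f : GRing.formula R) : bool :=
  match f with
  | GRing.Bool _ => true
  | GRing.Equal t1 t2 => term_noconst t1 && term_noconst t2
  | GRing.Unit t1 => term_noconst t1
  | GRing.And f1 f2 => formula_noconst f1 && formula_noconst f2
  | GRing.Or f1 f2 => formula_noconst f1 && formula_noconst f2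
  | GRing.Implies f1 f2 => formula_noconst f1 && formula_noconst f2
  | GRing.Not f1 => formula_noconst f1
  | GRing.Exists _ f1 => formula_noconst f1
  | GRing.Forall _ f1 => formula_noconst f1
  end.

(* A formula phi(x; y) is read with object variable x = 'X_0 and parameter
   variables y = 'X_1, 'X_2, ...; phi(c; a) holds iff GRing.holds (c :: a) phi. *)

Definition ICT_pattern_n (R : unitRingType) (phi psi : GRing.formula R) (n : nat) : Prop :=
  exists (a b : nat -> seq R),
    forall i0 j0, (i0 < n)%N -> (j0 < n)%N ->
      exists c : R, forall i j, (i < n)%N -> (j < n)%N ->
        (GRing.holds (c :: a i) phi <-> i = i0) /\
        (GRing.holds (c :: b j) psi <-> j = j0).

(* Th(R) has dp-rank <= 1 (dp-minimal): there is no ICT pattern of depth 2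
   in a single variable; by compactness this is equivalent to: for each pair
   of formulas, finite patterns do not exist in R for some length n. *)
Definition dp_minimal (R : unitRingType) : Prop :=
  forall phi psi : GRing.formula R,
    formula_noconst phi -> formula_noconst psi ->
    exists n : nat, ~ ICT_pattern_n phi psi n.

From HB Require Import structures.
From mathcomp Require Import all_boot all_order all_algebra.
From mathcomp Require Import fraction generic_quotient ring.
From Stdlib Require Import Classical.
Set Implicit Arguments. Unset Strict Implicit. Unset Printing Implicit Defensive.
Import GRing.Theory.
Local Open Scope ring_scope.

(* Only one instance of dp-minimality is needed, for the formula "b divides
   x - e": there is an N such that for all a, b, x, y, either the a x^i
   (i < N) are not pairwise incongruent modulo b or the b y^j are not pairwise
   incongruent modulo a; as a x^i - a x^(i+d) = a x^i (1 - x^d), b divides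
   some a x^i (1 - x^d) or a divides some b y^i (1 - y^d).
   With a = m^N, b = t^N and m + t = 1 this forces m or t to be a unit, so R
   is local. Fix m in M outside p. With a = m^N and b = v in p it shows that
   m divides v, so every w outside p divides every element of p; with x = y = m
   it shows that for all a, s some w outside p gives s | a w or a | s w. Hence
   every element of Frac(R) is g/w with w outside p, or is inverse to h/w with
   h in p, and primality of p in R transfers to Frac(R). *)

Section Divisibility.
Variable R : comUnitRingType.
Implicit Types a q x y z : R.

Definition divides a x := exists z, x = a * z.

Lemma divides_mull a x y : divides a x -> divides a (y * x).
Proof. by case=> z ->; exists (y * z); rewrite mulrCA. Qed.

Lemma dividesD a x y : divides a x -> divides a y -> divides a (x + y).
Proof. by case=> z -> [z' ->]; exists (z + z'); rewrite mulrDr. Qed.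

Lemma dividesB a x y : divides a x -> divides a y -> divides a (x - y).
Proof. by case=> z -> [z' ->]; exists (z - z'); rewrite mulrBr. Qed.

Lemma divides_addr a x y : divides a y -> divides a (x + y) <-> divides a x.
Proof.
move=> ay; split=> [axy|ax]; last exact: dividesD.
by rewrite -(addrK y x); apply: dividesB.
Qed.

Lemma divides_unitr a x u : u \is a GRing.unit -> divides a (x * u) -> divides a x.
Proof. by move=> uu /(divides_mull u^-1); rewrite mulrC mulrK. Qed.

Lemma divides_unitl u x : u \is a GRing.unit -> divides u x.
Proof. by move=> uu; exists (u^-1 * x); rewrite mulVKr. Qed.

Lemma divides1_unit a : divides a 1 -> a \is a GRing.unit.
Proof. by case=> z z1; apply/unitrPr; exists z. Qed.

Lemma divides_sub1M x q q' :
  divides x (q - 1) -> divides x (q' - 1) -> divides x (q * q' - 1).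
Proof.
move=> xq xq'; have -> : q * q' - 1 = q * (q' - 1) + (q - 1) by ring.
by apply: dividesD => //; apply: divides_mull.
Qed.

Lemma divides_sub1X x q n : divides x (q - 1) -> divides x (q ^+ n - 1).
Proof.
move=> xq; elim: n => [|n IH]; first by exists 0; rewrite subrr mulr0.
by rewrite exprS; apply: divides_sub1M.
Qed.

Lemma divides_1subX_sub1 x d : (0 < d)%N -> divides x (1 - x ^+ d - 1).
Proof. by case: d => // d _; exists (- x ^+ d); rewrite addrAC subrr add0r exprS mulrN. Qed.

End Divisibility.

Lemma divides_pow_cancel (R : idomainType) (x q : R) i N : x != 0 -> (i < N)%N ->
  divides (x ^+ N) (x ^+ i * q) -> divides x q.
Proof.
move=> x0 iN [z hz]; exists (x ^+ (N - i).-1 * z); apply: (mulfI (expf_neq0 i x0)).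
by rewrite hz !mulrA -exprSr -exprD addSnnS prednK ?subn_gt0 // subnKC // ltnW.
Qed.

Lemma geometric_diff (R : comNzRingType) (a x : R) i d :
  a * x ^+ i - a * x ^+ (i + d) = a * x ^+ i * (1 - x ^+ d).
Proof. by rewrite exprD; ring. Qed.

Section IdealFacts.
Variables (R : comUnitRingType) (I : R -> Prop).
Hypothesis idI : is_ideal I.

Lemma idealMr x r : I x -> I (x * r).
Proof. by rewrite mulrC; apply: idI.2.2. Qed.

Lemma idealX x d : (0 < d)%N -> I x -> I (x ^+ d).
Proof. by case: d => // d _ Ix; rewrite exprS; apply: idealMr. Qed.

Lemma ideal_unit_eq1 u : I u -> u \is a GRing.unit -> I 1.
Proof. by move=> Iu /unitrP[w [wu _]]; rewrite -wu; apply: idI.2.2. Qed.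

End IdealFacts.

Section PrimeIdealFacts.
Variables (R : comUnitRingType) (p : R -> Prop).
Hypothesis primep : is_prime_ideal p.

Lemma prime_idealX x k : p (x ^+ k) -> p x.
Proof.
elim: k => [|k IH]; first by rewrite expr0 => p1; case: primep.2.1.
by rewrite exprS => /primep.2.2[].
Qed.

Lemma prime_ideal_notinM x y : ~ p x -> ~ p y -> ~ p (x * y).
Proof. by move=> px py /primep.2.2[]. Qed.

Lemma prime_ideal_notin_neq0 w : ~ p w -> w != 0.
Proof. by apply: contra_notN => /eqP ->; exact: primep.1.1. Qed.

Lemma prime_ideal_unit_notin u : u \is a GRing.unit -> ~ p u.
Proof. by move=> uU pu; apply: primep.2.1; exact: (ideal_unit_eq1 primep.1 pu uU). Qed.

End PrimeIdealFacts.

Section FractionRepresentation.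
Variable R : idomainType.
Local Notation "x %:F" := (@FracField.tofrac R x).

Lemma frac_num_den (z : {fraction R}) : exists a s : R, s != 0 /\ z = a%:F / s%:F.
Proof.
elim/quotW: z => r; exists (\n_r), (\d_r); split; first exact: denom_ratioP.
have dr0 : (\d_r)%:F != 0 by rewrite tofrac_eq0 denom_ratioP.
apply: (mulIf dr0); rewrite divfK //; unlock FracField.tofrac; rewrite !piE.
apply/eqmodP; rewrite /= FracField.equivfE /FracField.mulf.
by rewrite !numden_Ratio ?mulf_neq0 ?oner_neq0 ?denom_ratioP // !mulr1 mulrC.
Qed.

End FractionRepresentation.

Section DpMinimalDomain.
Variable R : idomainType.
Hypothesis dpR : dp_minimal R.

Definition divides_formula : GRing.formula R :=
  GRing.Exists 3 (GRing.Equal (GRing.Add (GRing.Var _ 0) (GRing.Opp (GRing.Var _ 1)))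
                              (GRing.Mul (GRing.Var _ 2) (GRing.Var _ 3))).

Lemma holds_divides_formula c e b :
  GRing.holds [:: c; e; b] divides_formula <-> divides b (c - e).
Proof. by rewrite /=; split=> [[z ->]|[z ->]]; exists z. Qed.

Lemma geometric_incongruent_eq (a b x : R) N :
  (forall i d, (0 < d)%N -> (i + d < N)%N -> ~ divides b (a * x ^+ i * (1 - x ^+ d))) ->
  forall i i', (i < N)%N -> (i' < N)%N -> divides b (a * x ^+ i - a * x ^+ i') -> i = i'.
Proof.
have geom_ndiv i i' : (i < i')%N -> (i' < N)%N -> divides b (a * x ^+ i - a * x ^+ i') ->
    exists d, [/\ (0 < d)%N, (i + d < N)%N & divides b (a * x ^+ i * (1 - x ^+ d))].
  move=> lt_ii' i'N; have e : i' = (i + (i' - i))%N by rewrite subnKC // ltnW.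
  rewrite {1}e geometric_diff => bdiv.
  by exists (i' - i)%N; rewrite subn_gt0 -e.
move=> nodiv i i' iN i'N; case: (ltngtP i i') => // [lt_ii'|lt_i'i] bdiv.
  by have [d [d0 idN bd]] := geom_ndiv _ _ lt_ii' i'N bdiv; case: (nodiv _ _ d0 idN bd).
move: bdiv => /(divides_mull (-1)); rewrite mulN1r opprB.
by case/(geom_ndiv _ _ lt_i'i iN) => d [d0 idN bd]; case: (nodiv _ _ d0 idN bd).
Qed.

Lemma dp_minimal_geometric : exists N, forall a b x y : R,
  exists i d, [/\ (0 < d)%N, (i + d < N)%N &
    divides b (a * x ^+ i * (1 - x ^+ d)) \/ divides a (b * y ^+ i * (1 - y ^+ d))].
Proof.
have [N noICT] := @dpR divides_formula divides_formula erefl erefl.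
exists N => a b x y; apply: NNPP => nodiv; apply: noICT.
have incx : forall i d, (0 < d)%N -> (i + d < N)%N ->
    ~ divides b (a * x ^+ i * (1 - x ^+ d)).
  by move=> i d d0 idN bd; apply: nodiv; exists i, d; split => //; left.
have incy : forall j d, (0 < d)%N -> (j + d < N)%N ->
    ~ divides a (b * y ^+ j * (1 - y ^+ d)).
  by move=> j d d0 jdN ad; apply: nodiv; exists j, d; split => //; right.
exists (fun i => [:: a * x ^+ i; b]), (fun j => [:: b * y ^+ j; a]) => i0 j0 i0N j0N.
(* c = a x^i0 + b y^j0 lies in row i0 and column j0 of the pattern. *)
exists (a * x ^+ i0 + b * y ^+ j0) => i j iN jN; split; rewrite holds_divides_formula.
- rewrite addrAC divides_addr; last by exists (y ^+ j0).
  split=> [/(geometric_incongruent_eq incx i0N iN) //|->].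
  by exists 0; rewrite subrr mulr0.
- rewrite [_ + b * _]addrC addrAC divides_addr; last by exists (x ^+ i0).
  split=> [/(geometric_incongruent_eq incy j0N jN) //|->].
  by exists 0; rewrite subrr mulr0.
Qed.

Lemma not_divides_geometric (x y : R) N i d :
  x + y = 1 -> x != 0 -> x \isn't a GRing.unit -> (0 < d)%N -> (i + d < N)%N ->
  ~ divides (x ^+ N) (y ^+ N * x ^+ i * (1 - x ^+ d)).
Proof.
move=> xy1 x0 /negP xNu d0 idN.
rewrite mulrAC mulrC => /(divides_pow_cancel x0 (leq_ltn_trans (leq_addr d i) idN)) xq.
have xy : divides x (y - 1) by exists (-1); rewrite mulrN1 -xy1 opprD addrCA subrr addr0.
have xq1 := divides_sub1M (divides_sub1X N xy) (divides_1subX_sub1 x d0).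
by apply/xNu/divides1_unit; move: (dividesB xq xq1); rewrite subKr.
Qed.

Lemma dp_minimal_add_eq1_unit (x y : R) :
  x + y = 1 -> (x \is a GRing.unit) || (y \is a GRing.unit).
Proof.
move=> xy1; apply/negPn/negP; rewrite negb_or => /andP[xNu yNu].
have x0 : x != 0.
  by apply: contraNneq yNu => x0; move: xy1; rewrite x0 add0r => ->; exact: unitr1.
have y0 : y != 0.
  by apply: contraNneq xNu => y0; move: xy1; rewrite y0 addr0 => ->; exact: unitr1.
have [N geomN] := dp_minimal_geometric.
have [i [d [d0 idN [xdiv|ydiv]]]] := geomN (y ^+ N) (x ^+ N) x y.
  exact: (not_divides_geometric xy1 x0 xNu d0 idN xdiv).
by rewrite addrC in xy1; exact: (not_divides_geometric xy1 y0 yNu d0 idN ydiv).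
Qed.

Lemma dp_minimal_local (M : R -> Prop) u :
  is_maximal_ideal M -> ~ M u -> u \is a GRing.unit.
Proof.
move=> [idM [M1 maxM]] Mu.
pose J x := exists m r, M m /\ x = m + r * u.
have idJ : is_ideal J.
  split; first by exists 0, 0; rewrite mul0r addr0; split => //; exact: idM.1.
  split=> [x y [m [r [Mm ->]]] [m' [r' [Mm' ->]]] | r' x [m [r [Mm ->]]]].
    by exists (m + m'), (r + r'); split; [exact: idM.2.1 | rewrite mulrDl addrACA].
  by exists (r' * m), (r' * r); split; [exact: idM.2.2 | rewrite mulrDr mulrA].
have MJ x : M x -> J x by move=> Mx; exists x, 0; rewrite mul0r addr0.
have [/(_ u) JM | [m [r [Mm e1]]]] := maxM J idJ MJ.
  by case: Mu; apply/JM; exists 0, 1; rewrite add0r mul1r; split => //; exact: idM.1.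
have /orP[mU|] := dp_minimal_add_eq1_unit (esym e1).
  by case: M1; exact: ideal_unit_eq1 mU.
by rewrite unitrM => /andP[].
Qed.

Section PrimeBelowMaximal.
Variables (M p : R -> Prop).
Hypotheses (maxM : is_maximal_ideal M) (primep : is_prime_ideal p).
Local Notation "x %:F" := (@FracField.tofrac R x).

Lemma unit_1subX m d : M m -> (0 < d)%N -> 1 - m ^+ d \is a GRing.unit.
Proof.
move=> Mm d0; apply: (dp_minimal_local maxM) => M1m; apply: maxM.2.1.
by rewrite -(subrK (m ^+ d) 1); apply: maxM.1.2.1 M1m (idealX maxM.1 d0 Mm).
Qed.

Lemma prime_notin_geometric m i d : M m -> ~ p m -> (0 < d)%N ->
  ~ p (m ^+ i * (1 - m ^+ d)).
Proof.
move=> Mm pm d0; apply: (prime_ideal_notinM primep).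
  by move/(prime_idealX primep).
exact: (prime_ideal_unit_notin primep (unit_1subX Mm d0)).
Qed.

Lemma divides_prime_of_maximal_notin m v : M m -> ~ p m -> p v -> divides m v.
Proof.
move=> Mm pm pv; apply: NNPP => mNv.
have [N geomN] := dp_minimal_geometric.
have [i [d [d0 idN [[z e]|mdiv]]]] := geomN (m ^+ N) v m m.
  apply: (prime_notin_geometric (i := N + i) Mm pm d0).
  by rewrite exprD e; exact: (idealMr primep.1).
apply: mNv; apply: (divides_pow_cancel (prime_ideal_notin_neq0 primep pm)
  (leq_ltn_trans (leq_addr d i) idN)).
by rewrite mulrC; exact: (divides_unitr (unit_1subX Mm d0) mdiv).
Qed.

Lemma divides_prime_of_notin w g : ~ p w -> p g -> divides w g.
Proof.
move=> pw pg; case: (classic (M w)) => [Mw|Mw].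
  exact: divides_prime_of_maximal_notin.
exact/divides_unitl/(dp_minimal_local maxM).
Qed.

Lemma divides_total_up_to_notin m a s : M m -> ~ p m ->
  (exists2 w, ~ p w & divides s (a * w)) \/ (exists2 w, ~ p w & divides a (s * w)).
Proof.
move=> Mm pm; have [N geomN] := dp_minimal_geometric.
have [i [d [d0 _ [sdiv|adiv]]]] := geomN a s m m.
  by left; exists (m ^+ i * (1 - m ^+ d)); [exact: prime_notin_geometric | rewrite mulrA].
by right; exists (m ^+ i * (1 - m ^+ d)); [exact: prime_notin_geometric | rewrite mulrA].
Qed.

Lemma in_frac_div g w : p g -> ~ p w -> in_frac p (g%:F / w%:F).
Proof.
move=> pg pw; have [g' eg] := divides_prime_of_notin pw pg.
exists g'; split; first by move: pg; rewrite eg => /primep.2.2[].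
rewrite eg tofracM [_ * g'%:F]mulrC mulfK //.
by rewrite tofrac_eq0 (prime_ideal_notin_neq0 primep pw).
Qed.

Lemma in_frac_cofactor z z' h w : p h -> ~ p w ->
  z * (h%:F / w%:F) = 1 -> in_frac p (z * z') -> in_frac p z'.
Proof.
move=> ph pw ez [r [pr er]].
have -> : z' = (r * h)%:F / w%:F.
  transitivity (z' * (z * (h%:F / w%:F))); first by rewrite ez mulr1.
  by rewrite tofracM er; ring.
exact: (in_frac_div (idealMr primep.1 _ pr) pw).
Qed.

Lemma frac_localization_dichotomy m (z : {fraction R}) : M m -> ~ p m ->
  (exists g w, ~ p w /\ z = g%:F / w%:F) \/
  (exists h w, [/\ p h, ~ p w & z * (h%:F / w%:F) = 1]).
Proof.
move=> Mm pm; have [a [s [s0 ->]]] := frac_num_den z.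
have nz w : ~ p w -> w%:F != 0.
  by move=> pw; rewrite tofrac_eq0 (prime_ideal_notin_neq0 primep pw).
have s0F : s%:F != 0 by rewrite tofrac_eq0.
have [[w pw [g e]]|[w pw [h e]]] := divides_total_up_to_notin a s Mm pm.
  left; exists g, w; split => //; apply/eqP.
  by rewrite eqr_div ?s0F ?nz // -!tofracM tofrac_eq e mulrC.
case: (classic (p h)) => [ph|ph].
  right; exists h, w; split => //.
  rewrite mulf_div -!tofracM -e divff // tofrac_eq0.
  by rewrite mulf_neq0 // (prime_ideal_notin_neq0 primep pw).
left; exists w, h; split => //; apply/eqP.
by rewrite eqr_div ?s0F ?nz // -!tofracM tofrac_eq -e mulrC.
Qed.

Lemma strongly_prime_of_maximal_notin m : M m -> ~ p m -> strongly_prime p.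
Proof.
move=> Mm pm x y xy.
have [[g [w [pw ex]]]|[h [w [ph pw ex]]]] := frac_localization_dichotomy x Mm pm; last first.
  by right; exact: (in_frac_cofactor ph pw ex xy).
have [[g' [w' [pw' ey]]]|[h [w' [ph pw' ey]]]] := frac_localization_dichotomy y Mm pm; last first.
  by left; rewrite mulrC in xy; exact: (in_frac_cofactor ph pw' ey xy).
case: xy => r [pr exy].
have e : g * g' = r * (w * w').
  apply/eqP; rewrite -tofrac_eq !tofracM exy ex ey mulf_div divfK // -tofracM.
  by rewrite tofrac_eq0 mulf_neq0 // (prime_ideal_notin_neq0 primep).
have /primep.2.2[pg|pg'] : p (g * g') by rewrite e; exact: (idealMr primep.1).
  by left; rewrite ex; exact: in_frac_div.
by right; rewrite ey; exact: in_frac_div.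
Qed.

End PrimeBelowMaximal.

End DpMinimalDomain.

Theorem mainTheorem14 (R : idomainType) (M p : R -> Prop) :
  dp_minimal R ->
  is_maximal_ideal M ->
  is_prime_ideal p ->
  ~ (forall x, p x <-> M x) ->
  strongly_prime p.
Proof.
move=> dpR maxM primep pNM.
have [m [Mm pm]] : exists m, M m /\ ~ p m.
  apply: NNPP => noM; apply: pNM => x; split=> [px|Mx]; last first.
    by apply: NNPP => px; apply: noM; exists x.
  apply: NNPP => Mx.
  exact: (prime_ideal_unit_notin primep (dp_minimal_local dpR maxM Mx)).
exact: (strongly_prime_of_maximal_notin dpR maxM primep Mm pm).
Qed.
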